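(* Fix $z\in\{0,1\}$ and consider the program (P$_c$): minimize $\sum_{ij:Z_{ij}=z}c_{ij}\psi(w_{ij})$ over weights on the study units with $Z_{ij}=z$, subject to $\bigl|\sum_{ij:Z_{ij}=z}w_{ij}B_k(X_{ij})-B^*_k\bigr|\le\delta_k$ for $k=1,\dots,K$ and $w_{ij}\ge0$. Then: (a) The Lagrange dual problem of (P$_c$) is equivalent to the $L_1$-regularized empirical loss minimization $\min_{u\ge0,\lambda\in\mathbb{R}^K}\ \sum_{ij\in\mathcal{Q}}\bigl[-1\{Z_{ij}=z\}S_{ij}c_{ij}\rho\{(B(X_{ij})^\top\lambda-u_{ij})/c_{ij}\}\bigr]+(B^* )^\top\lambda+|\lambda|^\top\delta$. (b) If $\hat w^{*+}_z$ and $\lambda^\dagger_z$ are solutions of the primal problem (P$_c$) and of the dual problem in (a) respectively, then for every $ij$ with $Z_{ij}=z$ (in the study sample), $\hat w^{*+}_{z,ij}=\rho'\{B(X_{ij})^\top\lambda^\dagger_z/c_{ij}\}\,1\bigl[\rho'\{B(X_{ij})^\top\lambda^\dagger_z/c_{ij}\}>0\bigr]$.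
   Context: The combined sample consists of $n$ study units and $n^*$ target units; $\sum_{ij\in\mathcal{Q}}$ sums over all of them and $S_{ij}=1$ for study units, $S_{ij}=0$ for target units. Study unit $ij$ has binary treatment $Z_{ij}$ and covariates $X_{ij}$; all sums $\sum_{ij:Z_{ij}=z}$ are over study units. $B=(B_1,\dots,B_K)^\top$ are basis functions with $B_1\equiv1$; $B^*=(n^* )^{-1}\sum_{\text{target units}}B(X_{ij})$; $\delta=(\delta_k)$ with $\delta_k\ge0$, $\delta_1=0$; $|\lambda|$ is the componentwise absolute value. $c_{ij}>0$ are scaling factors. $\psi$ is convex, twice differentiable, with $\psi'$ invertible. Let $h(x)=\psi(-x)$ and $\rho(v)=-v(h')^{-1}(v)+h\{(h')^{-1}(v)\}$, so that $\rho'(v)=-(h')^{-1}(v)$. *)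

From HB Require Import structures.
From mathcomp Require Import all_boot all_order all_algebra.
From mathcomp Require Import all_classical all_reals all_analysis.
Set Implicit Arguments. Unset Strict Implicit. Unset Printing Implicit Defensive.
Import Order.TTheory GRing.Theory Num.Theory.
Local Open Scope ring_scope.

Section Defs.
Variables (R : realType) (I : finType) (T : Type) (K : nat).
(* combined sample Q = I; S i = study indicator; Z i = treatment; X i = covariates *)
Variables (S Z : I -> bool) (X : I -> T) (B : 'I_K.+1 -> T -> R)
          (c : I -> R) (delta : 'I_K.+1 -> R) (z : bool).

Definition sel (i : I) : bool := S i && (Z i == z).

Definition Bstar (k : 'I_K.+1) : R :=
  (#|[pred i | ~~ S i]|%:R)^-1 * \sum_(i | ~~ S i) B k (X i).

Definition Blam (lam : 'I_K.+1 -> R) (i : I) : R := \sum_k B k (X i) * lam k.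

Definition primal_obj (psi : R -> R) (w : I -> R) : R :=
  \sum_(i | sel i) c i * psi (w i).

Definition primal_feasible (w : I -> R) : Prop :=
  (forall k, `|\sum_(i | sel i) w i * B k (X i) - Bstar k| <= delta k) /\
  (forall i, sel i -> 0 <= w i).

Definition primal_solution (psi : R -> R) (w : I -> R) : Prop :=
  primal_feasible w /\
  forall w', primal_feasible w' -> primal_obj psi w <= primal_obj psi w'.

(* Lagrangian: constraints written as
     sum w B_k - B*_k - delta_k <= 0    (multiplier al k >= 0)
   - sum w B_k + B*_k - delta_k <= 0    (multiplier be k >= 0)
   - w_i <= 0   for selected i          (multiplier u i >= 0) *)
Definition lagrangian (psi : R -> R) (w : I -> R)
    (al be : 'I_K.+1 -> R) (u : I -> R) : R :=
  primal_obj psi w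
  + \sum_k al k * (\sum_(i | sel i) w i * B k (X i) - Bstar k - delta k)
  + \sum_k be k * (- (\sum_(i | sel i) w i * B k (X i)) + Bstar k - delta k)
  - \sum_(i | sel i) u i * w i.

Definition dual_fun (psi : R -> R) (al be : 'I_K.+1 -> R) (u : I -> R)
    : \bar R :=
  ereal_inf [set (lagrangian psi w al be u)%:E | w in [set: I -> R]].

Definition dual_feasible (al be : 'I_K.+1 -> R) (u : I -> R) : Prop :=
  (forall k, 0 <= al k) /\ (forall k, 0 <= be k) /\ (forall i, 0 <= u i).

Definition dual_value (psi : R -> R) : \bar R :=
  ereal_sup [set dual_fun psi p.1.1 p.1.2 p.2 |
             p in [set p | dual_feasible p.1.1 p.1.2 p.2]].

Definition dual_solution (psi : R -> R) al be u : Prop :=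
  dual_feasible al be u /\
  forall al' be' u', dual_feasible al' be' u' ->
    (dual_fun psi al' be' u' <= dual_fun psi al be u)%E.

(* h(x) = psi(-x), rho(v) = -v (h')^{-1}(v) + h((h')^{-1}(v)) *)
Definition hfun (psi : R -> R) (x : R) : R := psi (- x).
Definition rho (psi : R -> R) (hinv : R -> R) (v : R) : R :=
  - v * hinv v + hfun psi (hinv v).

Definition loss (psi hinv : R -> R) (lam : 'I_K.+1 -> R) (u : I -> R) : R :=
  \sum_i (- ((Z i == z)%:R * (S i)%:R * c i
             * rho psi hinv ((Blam lam i - u i) / c i)))
  + \sum_k Bstar k * lam k + \sum_k `|lam k| * delta k.

Definition loss_solution (psi hinv : R -> R) lam u : Prop :=
  (forall i, 0 <= u i) /\
  forall lam' u', (forall i, 0 <= u' i) -> loss psi hinv lam u <= loss psi hinv lam' u'.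

Definition loss_value (psi hinv : R -> R) : \bar R :=
  ereal_inf [set (loss psi hinv p.1 p.2)%:E | p in [set p | forall i, 0 <= p.2 i]].

End Defs.

(* For convex differentiable psi, rho v is the minimum of y |-> psi y + v y,
   attained exactly at drho v = - hinv v, and rho is concave with supergradient
   drho.  Minimising the Lagrangian in w therefore gives the dual function in
   closed form, sum_i c_i rho(v_i) - B*^T (al - be) - (al + be)^T delta with
   v_i = (B(X_i)^T (al - be) - u_i) / c_i; it only depends on lambda = al - be
   except for the penalty, which is smallest when al, be are the positive and
   negative parts of lambda, and this yields (a).
   For (b), the one-sided directional derivatives of the loss at an optimum
   (t -> 0+, by continuity of hinv) are the KKT conditions: the weights
   drho(v_i) are nonnegative, primal feasible, and attain the dual value, hence
   satisfy complementary slackness.  Since each Lagrangian term is uniquely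
   minimised at drho(v_i), any primal solution coincides with these weights,
   and complementary slackness gives the clipped formula. *)

From Pilot Require Import Defs.
From HB Require Import structures.
From mathcomp Require Import all_boot all_order all_algebra.
From mathcomp Require Import all_classical all_reals all_analysis.
From mathcomp Require Import ring lra.
Import Order.TTheory GRing.Theory Num.Theory numFieldNormedType.Exports.
Set Implicit Arguments. Unset Strict Implicit. Unset Printing Implicit Defensive.
Local Open Scope ring_scope.
Local Open Scope classical_set_scope.

Section convex_conjugate.
Variables (R : realType) (psi hinv : R -> R).
Hypothesis psi_convex : forall x y t : R, 0 <= t <= 1 ->
  psi (t * x + (1 - t) * y) <= t * psi x + (1 - t) * psi y.
Hypothesis psi_derivable : forall x, derivable psi x 1.
Local Notation dpsi := (derive1 psi).

Lemma convex_tangent_le x y : psi x + dpsi x * (y - x) <= psi y.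
Proof.
have psi_diff : differentiable psi x by apply/derivable1_diffP.
have Dq : (fun h => h^-1 *: (psi (h *: (y - x) + x) - psi x)) @ 0^'+
    --> (y - x) * dpsi x.
  rewrite -[_ * _]/(( *:%R^~ (dpsi x)) (y - x)) -deriv1E // -deriveE //.
  have Dv : (fun h => h^-1 *: (psi (h *: (y - x) + x) - psi x)) @ 0^'
      --> 'D_(y - x) psi x := diff_derivable (v := y - x) psi_diff.
  apply: cvg_trans Dv; apply: cvg_fmap2.
  by apply: within_subset => h /= /lt0r_neq0.
(* For 0 < h <= 1 convexity bounds the difference quotient by the secant slope. *)
suff : (y - x) * dpsi x <= psi y - psi x by lra.
apply: (cvgr_to_le Dq); near=> h.
have h0 : 0 < h by near: h; exact: nbhs_right_gt.
have h1 : h <= 1 by near: h; exact: nbhs_right_le.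
have := @psi_convex y x h; rewrite (ltW h0) h1 => /(_ isT).
rewrite /GRing.scale /= (_ : h * y + (1 - h) * x = h * (y - x) + x); last by ring.
by rewrite ler_pdivrMl //; lra.
Unshelve. all: by end_near.
Qed.

Lemma derive1_psi_le : {homo dpsi : x y / x <= y}.
Proof.
move=> x y xy; have := convex_tangent_le x y; have := convex_tangent_le y x.
rewrite le_eqVlt in xy; case/orP: xy => [/eqP -> //|xy]; nra.
Qed.

Lemma derive1_hfun x : derive1 (hfun psi) x = - dpsi (- x).
Proof.
rewrite /hfun -[fun x => psi (- x)]/(psi \o -%R) derive1_comp; last 2 first.
- exact: derivable_opp.
- exact: psi_derivable.
rewrite (_ : -%R = - id :> (R -> R)) // derive1N ?derive1_id ?mulrN1 //.
Qed.

Hypothesis hinvK : cancel (derive1 (hfun psi)) hinv.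
Hypothesis hinvKV : cancel hinv (derive1 (hfun psi)).

Lemma derive1_psi_inj : injective dpsi.
Proof.
move=> a b dab; apply/oppr_inj/(can_inj hinvK).
by rewrite !derive1_hfun !opprK dab.
Qed.

Lemma derive1_psi_lt : {homo dpsi : x y / x < y}.
Proof.
move=> x y xy; rewrite lt_neqAle derive1_psi_le ?ltW // andbT.
by apply: contraTneq xy => /derive1_psi_inj ->; rewrite ltxx.
Qed.

Lemma derive1_psi_strict_mono x y : x != y -> 0 < (dpsi x - dpsi y) * (x - y).
Proof.
case: (ltgtP x y) => // [xy|yx] _.
- by have := derive1_psi_lt xy; nra.
- by have := derive1_psi_lt yx; nra.
Qed.

Lemma convex_tangent_lt x y : x != y -> psi x + dpsi x * (y - x) < psi y.
Proof.
move=> xy; pose m := (x + y) / 2.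
have mx : m != x by rewrite /m; apply: contra_neq xy => ?; lra.
have := derive1_psi_strict_mono mx.
have := convex_tangent_le x m; have := convex_tangent_le m y.
rewrite /m; nra.
Qed.

(* [drho] is rho' in the paper's notation. *)
Definition drho (v : R) : R := - hinv v.

Lemma derive1_psi_drho v : dpsi (drho v) = - v.
Proof. by rewrite -[in RHS](hinvKV v) derive1_hfun opprK. Qed.

Lemma rhoE v : rho psi hinv v = psi (drho v) + v * drho v.
Proof. rewrite /rho /hfun /drho; ring. Qed.

Lemma rho_le v y : rho psi hinv v <= psi y + v * y.
Proof. by rewrite rhoE; have := convex_tangent_le (drho v) y; rewrite derive1_psi_drho; lra. Qed.

Lemma rho_lt v y : y != drho v -> rho psi hinv v < psi y + v * y.
Proof.
rewrite eq_sym rhoE => /convex_tangent_lt; rewrite derive1_psi_drho; lra.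
Qed.

Lemma rho_superdiff v v' : rho psi hinv v' - rho psi hinv v >= (v' - v) * drho v'.
Proof. by have := rho_le v (drho v'); rewrite (rhoE v'); lra. Qed.

Lemma hinv_lt : {homo hinv : v v' / v < v'}.
Proof.
move=> v v' vv'; rewrite ltNge; apply: contraTN vv' => le_hinv.
by rewrite -leNgt -(hinvKV v) -(hinvKV v') !derive1_hfun lerN2 derive1_psi_le // lerN2.
Qed.

Hypothesis derive1_psi_derivable : forall x, derivable dpsi x 1.

Lemma drho_continuous : continuous drho.
Proof.
have dpsi_cont : continuous dpsi.
  by move=> x; apply/differentiable_continuous/derivable1_diffP.
have dh_cont : continuous (derive1 (hfun psi)).
  move=> x; rewrite (funext derive1_hfun); apply: cvgN.
  exact: (cvg_comp _ _ (cvgN cvg_id) (dpsi_cont (- x))).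
move=> v; apply: cvgN.
have hK : {near hinv v, cancel (derive1 (hfun psi)) hinv} by near=> y; exact: hinvK.
have dhc : {near hinv v, continuous (derive1 (hfun psi))} by near=> y; exact: dh_cont.
by have /nbhs_singleton := near_can_continuous hK dhc; rewrite hinvKV.
Unshelve. all: by end_near.
Qed.

Section lagrange_duality.
Variables (I : finType) (T : Type) (K : nat).
Variables (S Z : I -> bool) (X : I -> T) (B : 'I_K.+1 -> T -> R)
          (c : I -> R) (delta : 'I_K.+1 -> R) (z : bool).
Hypothesis delta_ge0 : forall k, 0 <= delta k.
Hypothesis c_gt0 : forall i, 0 < c i.

Local Notation sel := (sel S Z z).
Local Notation Bstar := (Bstar S X B).
Local Notation Blam := (Blam X B).
Local Notation rho := (rho psi hinv).
Local Notation loss := (loss S Z X B c delta z psi hinv).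
Local Notation loss_solution := (loss_solution S Z X B c delta z psi hinv).
Local Notation primal_obj := (primal_obj S Z c z psi).

Definition dual_arg (lam : 'I_K.+1 -> R) (u : I -> R) (i : I) : R :=
  (Blam lam i - u i) / c i.

Definition moment (w : I -> R) (k : 'I_K.+1) : R := \sum_(i | sel i) w i * B k (X i).

Lemma lossE lam u : loss lam u =
  - \sum_(i | sel i) c i * rho (dual_arg lam u i)
  + \sum_k Bstar k * lam k + \sum_k `|lam k| * delta k.
Proof.
rewrite /loss sumrN [in RHS]big_mkcond /=; congr (- _ + _ + _).
apply: eq_bigr => i _; rewrite /Defs.sel /dual_arg.
by case: (S i); case: (Z i == z); rewrite /= ?mul1r ?mul0r.
Qed.

Lemma sum_Blam_moment w lam :
  \sum_(i | sel i) w i * Blam lam i = \sum_k lam k * moment w k.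
Proof.
under eq_bigr do rewrite /Defs.Blam mulr_sumr.
rewrite exchange_big /=; apply: eq_bigr => k _; rewrite /moment mulr_sumr.
by apply: eq_bigr => i _; ring.
Qed.

Lemma lagrangianE w al be u :
  lagrangian S Z X B c delta z psi w al be u =
    \sum_(i | sel i) c i * (psi (w i) + dual_arg (fun k => al k - be k) u i * w i)
    - \sum_k Bstar k * (al k - be k) - \sum_k (al k + be k) * delta k.
Proof.
rewrite /lagrangian /primal_obj -!/(moment w _).
have Ew : \sum_(i | sel i) c i * (psi (w i) + dual_arg (fun k => al k - be k) u i * w i)
    = \sum_(i | sel i) c i * psi (w i)
      + \sum_(i | sel i) w i * Blam (fun k => al k - be k) i - \sum_(i | sel i) u i * w i.
  rewrite -big_split -sumrB /=; apply: eq_bigr => i _; rewrite /dual_arg.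
  by field; rewrite gt_eqF.
rewrite sum_Blam_moment in Ew.
have Ek : \sum_k al k * (moment w k - Bstar k - delta k)
          + \sum_k be k * (- moment w k + Bstar k - delta k)
    = \sum_k (al k - be k) * moment w k - \sum_k Bstar k * (al k - be k)
      - \sum_k (al k + be k) * delta k.
  by rewrite -big_split -!sumrB /=; apply: eq_bigr => k _; ring.
lra.
Qed.

Definition dual_closed (al be : 'I_K.+1 -> R) (u : I -> R) : R :=
  \sum_(i | sel i) c i * rho (dual_arg (fun k => al k - be k) u i)
  - \sum_k Bstar k * (al k - be k) - \sum_k (al k + be k) * delta k.

Lemma dual_funE al be u :
  dual_fun S Z X B c delta z psi al be u = (dual_closed al be u)%:E.
Proof.
apply/le_anti/andP; split.
- apply: ge_ereal_inf; exists (dual_closed al be u)%:E => //.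
  exists (fun i => drho (dual_arg (fun k => al k - be k) u i)) => //.
  rewrite lagrangianE /dual_closed; congr (_ - _ - _)%:E.
  by apply: eq_bigr => i _; rewrite rhoE.
- apply: le_ereal_inf_tmp => _ [w _ <-]; rewrite lee_fin lagrangianE.
  rewrite lerB // lerB //; apply: ler_sum => i _.
  by rewrite ler_pM2l // rho_le.
Qed.

Lemma dual_closed_le_loss al be u : (forall k, 0 <= al k) -> (forall k, 0 <= be k) ->
  dual_closed al be u <= - loss (fun k => al k - be k) u.
Proof.
move=> al_ge0 be_ge0; rewrite lossE /dual_closed.
suff : \sum_k `|al k - be k| * delta k <= \sum_k (al k + be k) * delta k by lra.
apply: ler_sum => k _; rewrite ler_wpM2r //.
by apply: le_trans (ler_normB _ _) _; rewrite !ger0_norm.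
Qed.

Lemma dual_closed_funrposneg lam u : dual_closed lam^\+ lam^\- u = - loss lam u.
Proof.
have lamE k : lam^\+ k - lam^\- k = lam k.
  by have /(congr1 (fun f => f k)) := funrposBneg lam.
have normE k : lam^\+ k + lam^\- k = `|lam k|.
  by have /(congr1 (fun f => f k)) := funrposDneg lam.
have EB : \sum_k Bstar k * (lam^\+ k - lam^\- k) = \sum_k Bstar k * lam k.
  by apply: eq_bigr => k _; rewrite lamE.
have ED : \sum_k (lam^\+ k + lam^\- k) * delta k = \sum_k `|lam k| * delta k.
  by apply: eq_bigr => k _; rewrite normE.
rewrite lossE /dual_closed (funext lamE).
lra.
Qed.

Lemma dual_feasible_funrposneg (lam : 'I_K.+1 -> R) (u : I -> R) :
  (forall i, 0 <= u i) -> dual_feasible lam^\+ lam^\- u.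
Proof.
by move=> u_ge0; split=> [k|]; [|split=> // k]; rewrite ?funrpos_ge0 ?funrneg_ge0.
Qed.

Lemma dual_value_loss_value :
  dual_value S Z X B c delta z psi = (- loss_value S Z X B c delta z psi hinv)%E.
Proof.
rewrite /loss_value /ereal_inf oppeK.
apply/le_anti/andP; split.
- apply: ge_ereal_sup => _ [[[al be] u] /= [al_ge0 [be_ge0 u_ge0]] <-].
  apply: le_ereal_sup_tmp.
  exists (- (loss (fun k => al k - be k) u)%:E)%E.
    by exists (loss (fun k => al k - be k) u)%:E => //; exists ((fun k => al k - be k), u).
  by rewrite dual_funE lee_fin dual_closed_le_loss.
- apply: ge_ereal_sup => _ [_ [[lam u] /= u_ge0 <-] <-].
  apply: le_ereal_sup_tmp; exists (dual_fun S Z X B c delta z psi lam^\+ lam^\- u).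
    by exists (lam^\+, lam^\-, u) => //; exact: dual_feasible_funrposneg.
  by rewrite dual_funE dual_closed_funrposneg.
Qed.

Lemma dual_solution_loss_solution al be u :
  dual_solution S Z X B c delta z psi al be u -> loss_solution (fun k => al k - be k) u.
Proof.
move=> [[al_ge0 [be_ge0 u_ge0]] opt]; split => // lam' u' u'_ge0.
have := opt _ _ _ (dual_feasible_funrposneg lam' u'_ge0).
rewrite !dual_funE lee_fin dual_closed_funrposneg.
by have := dual_closed_le_loss u al_ge0 be_ge0; lra.
Qed.

Lemma loss_solution_dual_solution lam u :
  loss_solution lam u -> dual_solution S Z X B c delta z psi lam^\+ lam^\- u.
Proof.
move=> [u_ge0 opt]; split; first exact: dual_feasible_funrposneg.
move=> al be u' [al_ge0 [be_ge0 u'_ge0]].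
rewrite !dual_funE lee_fin dual_closed_funrposneg.
by have := dual_closed_le_loss u' al_ge0 be_ge0; have := opt (fun k => al k - be k) _ u'_ge0; lra.
Qed.

Lemma dual_arg_lin lam u dl du t i :
  dual_arg (fun k => lam k + t * dl k) (fun i => u i + t * du i) i
  = dual_arg lam u i + t * dual_arg dl du i.
Proof.
rewrite /dual_arg.
have -> : Blam (fun k => lam k + t * dl k) i = Blam lam i + t * Blam dl i.
  by rewrite /Defs.Blam mulr_sumr -big_split; apply: eq_bigr => k _ /=; ring.
ring.
Qed.

Lemma loss_solution_slope lam u dl du M t :
  loss_solution lam u -> 0 < t -> (forall i, 0 <= u i + t * du i) ->
  \sum_k `|lam k + t * dl k| * delta k - \sum_k `|lam k| * delta k <= t * M ->
  \sum_(i | sel i) drho (dual_arg lam u i + t * dual_arg dl du i) * (Blam dl i - du i)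
    <= \sum_k Bstar k * dl k + M.
Proof.
move=> [_ opt] t_gt0 u_ge0 dM.
have := opt (fun k => lam k + t * dl k) _ u_ge0; rewrite !lossE.
have -> : \sum_(i | sel i) c i * rho (dual_arg (fun k => lam k + t * dl k)
                                       (fun i => u i + t * du i) i)
    = \sum_(i | sel i) c i * rho (dual_arg lam u i + t * dual_arg dl du i).
  by apply: eq_bigr => i _; rewrite dual_arg_lin.
have -> : \sum_k Bstar k * (lam k + t * dl k)
    = \sum_k Bstar k * lam k + t * \sum_k Bstar k * dl k.
  by rewrite mulr_sumr -big_split; apply: eq_bigr => k _ /=; ring.
have rho_step : t * \sum_(i | sel i) drho (dual_arg lam u i + t * dual_arg dl du i)
                                     * (Blam dl i - du i)
    <= \sum_(i | sel i) c i * rho (dual_arg lam u i + t * dual_arg dl du i)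
       - \sum_(i | sel i) c i * rho (dual_arg lam u i).
  rewrite -sumrB mulr_sumr; apply: ler_sum => i _; rewrite -mulrBr.
  set v := dual_arg lam u i; set v' := v + t * dual_arg dl du i.
  have -> : t * (drho v' * (Blam dl i - du i)) = c i * ((v' - v) * drho v').
    by rewrite /v' /dual_arg; field; rewrite gt_eqF.
  by rewrite ler_pM2l // rho_superdiff.
move=> opt_t; rewrite -(ler_pM2l t_gt0); lra.
Qed.

(* At an optimum the one-sided derivative of the loss in the direction
   [(dl, du)] is nonnegative; [M] bounds the slope of the L1 penalty. *)
Lemma loss_solution_directional lam u dl du M :
  loss_solution lam u ->
  (forall t, 0 < t <= 1 -> forall i, 0 <= u i + t * du i) ->
  (forall t, 0 < t <= 1 ->
     \sum_k `|lam k + t * dl k| * delta k - \sum_k `|lam k| * delta k <= t * M) ->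
  \sum_(i | sel i) drho (dual_arg lam u i) * (Blam dl i - du i)
    <= \sum_k Bstar k * dl k + M.
Proof.
move=> sol u_ge0 dM.
pose F t := \sum_(i | sel i)
  drho (dual_arg lam u i + t * dual_arg dl du i) * (Blam dl i - du i).
have F_cont : continuous F.
  apply: continuous_big; first exact: add_continuous.
  move=> i _ t; apply: cvgMr_tmp.
  have affine_cvg : dual_arg lam u i + x * dual_arg dl du i @[x --> t]
      --> dual_arg lam u i + t * dual_arg dl du i.
    by apply: cvgD; [exact: cvg_cst | exact: cvgMr_tmp cvg_id].
  exact: cvg_comp affine_cvg (@drho_continuous _).
have <- : F 0 = \sum_(i | sel i) drho (dual_arg lam u i) * (Blam dl i - du i).
  by apply: eq_bigr => i _; rewrite mul0r addr0.
apply: (cvgr_to_le (cvg_at_right_filter (F_cont 0))); near=> t.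
have t01 : 0 < t <= 1.
  by apply/andP; split; near: t; [exact: nbhs_right_gt | exact: nbhs_right_le].
have [t_gt0 _] := andP t01.
exact: loss_solution_slope sol t_gt0 (u_ge0 t t01) (dM t t01).
Unshelve. all: by end_near.
Qed.

Lemma sum_Blam_le_feasible w lam :
  (forall k, `|moment w k - Bstar k| <= delta k) ->
  \sum_(i | sel i) w i * Blam lam i
    <= \sum_k Bstar k * lam k + \sum_k `|lam k| * delta k.
Proof.
move=> w_feas; rewrite sum_Blam_moment -big_split; apply: ler_sum => k _ /=.
suff : lam k * (moment w k - Bstar k) <= `|lam k| * delta k by lra.
apply: le_trans (ler_norm _) _; rewrite normrM; exact: ler_wpM2l.
Qed.

Lemma sum_norm_shift_le lam dl t : 0 <= t ->
  \sum_k `|lam k + t * dl k| * delta k - \sum_k `|lam k| * delta k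
    <= t * \sum_k `|dl k| * delta k.
Proof.
move=> t_ge0; rewrite -sumrB mulr_sumr; apply: ler_sum => k _.
rewrite -mulrBl mulrA; apply: ler_wpM2r => //.
by have := ler_normD (lam k) (t * dl k); rewrite normrM (ger0_norm t_ge0); lra.
Qed.

Section loss_solution.
Variables (lam : 'I_K.+1 -> R) (u : I -> R).
Hypothesis sol : loss_solution lam u.

Definition dual_weight (i : I) : R := drho (dual_arg lam u i).

(* The KKT conditions, from the directions (0, e_i), (+-e_k, 0) and +-(lam, u). *)
Lemma dual_weight_ge0 i : sel i -> 0 <= dual_weight i.
Proof.
move=> si; have [u_ge0 _] := sol.
have := loss_solution_directional (dl := fun _ => 0) (du := fun j => (j == i)%:R)
  (M := 0) sol.
have Blam0 j : Blam (fun _ => 0) j = 0 by rewrite /Defs.Blam big1 // => k _; rewrite mulr0.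
have -> : \sum_(j | sel j) drho (dual_arg lam u j) * (Blam (fun _ => 0) j - (j == i)%:R)
    = - dual_weight i.
  rewrite (bigD1 i) //= eqxx Blam0 big1 ?addr0; first by rewrite sub0r mulrN1.
  by move=> j /andP[_ /negbTE ->]; rewrite Blam0 subr0 mulr0.
rewrite [\sum_k Bstar k * 0]big1 => [|k _]; last by rewrite mulr0.
rewrite addr0 oppr_le0; apply.
- by move=> t /andP[t_gt0 _] j; rewrite addr_ge0 // mulr_ge0 // ltW.
- by move=> t _; rewrite mulr0; under eq_bigr do rewrite addr0; rewrite subrr.
Qed.

Lemma dual_weight_moment k : `|moment dual_weight k - Bstar k| <= delta k.
Proof.
have dir s : `|s| = 1 -> s * (moment dual_weight k - Bstar k) <= delta k.
  move=> s1; have := loss_solution_directional (dl := fun j => s * (j == k)%:R)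
    (du := fun _ => 0) (M := delta k) sol.
  have Ek (F : 'I_K.+1 -> R) : \sum_j F j * (s * (j == k)%:R) = F k * s.
    by rewrite (bigD1 k) //= eqxx mulr1 big1 ?addr0 // => j /negbTE ->; rewrite !mulr0.
  have -> : \sum_(i | sel i)
        drho (dual_arg lam u i) * (Blam (fun j => s * (j == k)%:R) i - 0)
      = s * moment dual_weight k.
    rewrite /moment mulr_sumr; apply: eq_bigr => i _.
    by rewrite /Defs.Blam Ek /dual_weight; ring.
  rewrite Ek => dir_k; suff : s * moment dual_weight k <= Bstar k * s + delta k by lra.
  apply: dir_k.
  - by move=> t _ i; rewrite mulr0 addr0; have [] := sol.
  - move=> t /andP[t_gt0 _]; apply: le_trans (sum_norm_shift_le lam _ (ltW t_gt0)) _.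
    rewrite (bigD1 k) //= eqxx mulr1 s1 mul1r big1 ?addr0 // => j /negbTE ->.
    by rewrite mulr0 normr0 mul0r.
rewrite ler_norml; apply/andP; split.
- by have := dir (-1); rewrite normrN normr1 => /(_ erefl); lra.
- by have := dir 1 (normr1 _); lra.
Qed.

Lemma dual_weight_gap : \sum_(i | sel i) dual_weight i * (Blam lam i - u i)
  = \sum_k Bstar k * lam k + \sum_k `|lam k| * delta k.
Proof.
have dir s : -1 <= s <= 1 ->
    s * \sum_(i | sel i) dual_weight i * (Blam lam i - u i)
    <= s * (\sum_k Bstar k * lam k + \sum_k `|lam k| * delta k).
  move=> /andP[s_ge s_le].
  have := loss_solution_directional (dl := fun k => s * lam k) (du := fun i => s * u i)
    (M := s * \sum_k `|lam k| * delta k) sol.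
  have -> : \sum_(i | sel i)
        drho (dual_arg lam u i) * (Blam (fun k => s * lam k) i - s * u i)
      = s * \sum_(i | sel i) dual_weight i * (Blam lam i - u i).
    rewrite mulr_sumr; apply: eq_bigr => i _.
    have -> : Blam (fun k => s * lam k) i = s * Blam lam i.
      by rewrite /Defs.Blam mulr_sumr; apply: eq_bigr => j _; ring.
    by rewrite /dual_weight; ring.
  have -> : \sum_k Bstar k * (s * lam k) = s * \sum_k Bstar k * lam k.
    by rewrite mulr_sumr; apply: eq_bigr => k _; ring.
  rewrite mulrDr; apply.
  - move=> t /andP[t_gt0 t_le1] i; have [u_ge0 _] := sol.
    rewrite (_ : u i + t * (s * u i) = (1 + t * s) * u i); last by ring.
    by rewrite mulr_ge0 //; nra.
  - move=> t /andP[t_gt0 t_le1].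
    have ts_ge0 : 0 <= 1 + t * s by nra.
    have -> : \sum_k `|lam k + t * (s * lam k)| * delta k
        = (1 + t * s) * \sum_k `|lam k| * delta k.
      rewrite mulr_sumr; apply: eq_bigr => k _.
      rewrite (_ : lam k + t * (s * lam k) = (1 + t * s) * lam k); last by ring.
      by rewrite normrM (ger0_norm ts_ge0); ring.
    lra.
have le_pos := dir 1 (ltac:(apply/andP; split; lra)).
have le_neg := dir (-1) (ltac:(apply/andP; split; lra)).
by apply/le_anti/andP; split; lra.
Qed.

Lemma dual_weight_slack i : sel i -> dual_weight i * u i = 0.
Proof.
move=> si; have [u_ge0 _] := sol.
have wu_ge0 j : sel j -> 0 <= dual_weight j * u j.
  by move=> sj; rewrite mulr_ge0 ?dual_weight_ge0.
have sum_wu_le0 : \sum_(j | sel j) dual_weight j * u j <= 0.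
  have := sum_Blam_le_feasible lam dual_weight_moment.
  have -> : \sum_(j | sel j) dual_weight j * Blam lam j
      = \sum_(j | sel j) dual_weight j * (Blam lam j - u j)
        + \sum_(j | sel j) dual_weight j * u j.
    by rewrite -big_split; apply: eq_bigr => j _ /=; ring.
  rewrite dual_weight_gap; lra.
apply/le_anti; rewrite wu_ge0 // andbT; apply: le_trans sum_wu_le0.
by rewrite (bigD1 i) //= lerDl sumr_ge0 // => j /andP[/wu_ge0].
Qed.

(* Weak duality bounds the sum of the Lagrangian terms [G j] at [w] by their
   sum at [dual_weight], where each of them is uniquely minimised. *)
Lemma primal_solution_dual_weight w :
  primal_solution S Z X B c delta z psi w -> forall i, sel i -> w i = dual_weight i.
Proof.
move=> [[w_moment w_ge0] w_opt] i si; have [u_ge0 _] := sol.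
have obj_le : primal_obj w <= primal_obj dual_weight.
  by apply: w_opt; split; [exact: dual_weight_moment | exact: dual_weight_ge0].
pose G j y := c j * (psi y + dual_arg lam u j * y).
have G_min j y : sel j -> G j (dual_weight j) <= G j y.
  by move=> _; rewrite ler_pM2l // -rhoE rho_le.
have G_w : \sum_(j | sel j) G j (w j) = primal_obj w
    + \sum_(j | sel j) w j * Blam lam j - \sum_(j | sel j) u j * w j.
  rewrite /primal_obj -big_split -sumrB; apply: eq_bigr => j _ /=.
  by rewrite /G /dual_arg; field; rewrite gt_eqF.
have G_W : \sum_(j | sel j) G j (dual_weight j) = primal_obj dual_weight
    + \sum_(j | sel j) dual_weight j * (Blam lam j - u j).
  rewrite /primal_obj -big_split; apply: eq_bigr => j _ /=.
  by rewrite /G /dual_arg; field; rewrite gt_eqF.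
have uw_ge0 : 0 <= \sum_(j | sel j) u j * w j.
  by rewrite sumr_ge0 // => j /w_ge0/(mulr_ge0 (u_ge0 j)).
have := sum_Blam_le_feasible lam w_moment; rewrite -dual_weight_gap => wB.
have sum_gap : \sum_(j | sel j) (G j (w j) - G j (dual_weight j)) <= 0.
  by rewrite sumrB; lra.
apply/eqP; apply: contraTT sum_gap => w_ne; rewrite -ltNge (bigD1 i) //=.
have gap_i : 0 < G i (w i) - G i (dual_weight i).
  by rewrite subr_gt0 ltr_pM2l // -rhoE rho_lt.
have gap_rest : 0 <= \sum_(j | sel j && (j != i)) (G j (w j) - G j (dual_weight j)).
  by apply: sumr_ge0 => j /andP[sj _]; rewrite subr_ge0 G_min.
lra.
Qed.

Lemma dual_weight_clip i : sel i ->
  let r := drho (Blam lam i / c i) in dual_weight i = r * ((0 < r)%R : bool)%:R.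
Proof.
move=> si r; have [u_ge0 _] := sol.
have [u0|u_ne0] := eqVneq (u i) 0.
  have Wr : dual_weight i = r by rewrite /dual_weight /dual_arg u0 subr0.
  have := dual_weight_ge0 si; rewrite Wr le_eqVlt.
  by case/predU1P=> [<-|->]; rewrite ?mul0r ?mulr1.
have u_gt0 : 0 < u i by rewrite lt_def u_ne0 u_ge0.
have W0 : dual_weight i = 0.
  by have /eqP := dual_weight_slack si; rewrite mulf_eq0 (negbTE u_ne0) orbF => /eqP.
have r_lt0 : r < 0.
  rewrite -W0 /r /dual_weight /drho ltrN2; apply: hinv_lt.
  by rewrite /dual_arg ltr_pM2r ?invr_gt0 // ltrBlDr ltrDl.
by rewrite W0 (lt_gtF r_lt0) mulr0.
Qed.

End loss_solution.

End lagrange_duality.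
End convex_conjugate.

Theorem theoremS2 (R : realType) (I : finType) (T : Type) (K : nat)
    (S Z : I -> bool) (X : I -> T) (B : 'I_K.+1 -> T -> R)
    (c : I -> R) (delta : 'I_K.+1 -> R) (z : bool)
    (psi hinv : R -> R)
    (hB1 : forall x, B ord0 x = 1)
    (hdelta : forall k, 0 <= delta k)
    (hdelta1 : delta ord0 = 0)
    (hc : forall i, 0 < c i)
    (hconv : forall (x y t : R), 0 <= t <= 1 ->
        psi (t * x + (1 - t) * y) <= t * psi x + (1 - t) * psi y)
    (hdiff1 : forall x, derivable psi x 1)
    (hdiff2 : forall x, derivable (derive1 psi) x 1)
    (hinvertible : bijective (derive1 psi))
    (hinv_l : cancel (derive1 (hfun psi)) hinv)
    (hinv_r : cancel hinv (derive1 (hfun psi))) :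
  (* (a) the Lagrange dual of (P_c) is equivalent to the L1-regularized loss
     minimization, with lambda = al - be *)
  (dual_value S Z X B c delta z psi = - loss_value S Z X B c delta z psi hinv)%E
  /\ (forall al be u, dual_solution S Z X B c delta z psi al be u ->
        loss_solution S Z X B c delta z psi hinv (fun k => al k - be k) u)
  /\ (forall lam u, loss_solution S Z X B c delta z psi hinv lam u ->
        dual_solution S Z X B c delta z psi
          (fun k => Num.max (lam k) 0) (fun k => Num.max (- lam k) 0) u)
  (* (b) primal solution recovered from a dual solution; rho'(v) = - hinv v *)
  /\ (forall (w : I -> R) (lam : 'I_K.+1 -> R) (u : I -> R),
        primal_solution S Z X B c delta z psi w ->
        loss_solution S Z X B c delta z psi hinv lam u ->
        forall i, S i -> Z i = z ->
          let r := - hinv (Blam X B lam i / c i) in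
          w i = r * ((0 < r)%R : bool)%:R).
Proof.
split; first by apply: dual_value_loss_value.
split; first by move=> al be u; apply: dual_solution_loss_solution.
split; first by move=> lam u; apply: loss_solution_dual_solution.
move=> w lam u w_sol lam_sol i Si Zi.
have si : sel S Z z i by rewrite /sel Si Zi eqxx.
rewrite (primal_solution_dual_weight hconv hdiff1 hinv_l hinv_r hdiff2 hdelta hc
  lam_sol w_sol si).
exact: (dual_weight_clip hconv hdiff1 hinv_l hinv_r hdiff2 hdelta hc lam_sol si).
Qed.
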